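(* Let $q=2^m$ with $q\equiv 1\pmod 3$, and let $s=\frac{q^2+q+1}{3}$. Let $c\in\mathbb{F}_{q^2}^*$ satisfy $\mathrm{Tr}_1^m(c^{q+1})=0$. Then \[ f(x)=cx+x^s+c^q x^{qs} \] is a permutation polynomial of $\mathbb{F}_{q^2}$.
   Context: For $y\in\mathbb{F}_{2^m}$, $\mathrm{Tr}_1^m(y)=\sum_{i=0}^{m-1}y^{2^i}$ is the absolute trace; note $c^{q+1}\in\mathbb{F}_q$. A polynomial is a permutation polynomial of a finite field if it induces a bijection of that field. *)

From HB Require Import structures.
From mathcomp Require Import all_boot all_order all_algebra all_field.
Set Implicit Arguments. Unset Strict Implicit. Unset Printing Implicit Defensive.
Import GRing.Theory.
Local Open Scope ring_scope.

Definition abs_trace (F : pzRingType) (m : nat) (y : F) : F :=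
  \sum_(i < m) y ^+ (2 ^ i).

Definition is_perm_poly (F : finFieldType) (f : F -> F) : Prop := bijective f.

From HB Require Import structures.
From mathcomp Require Import all_boot all_order all_algebra all_field.
From mathcomp Require Import ring zify.
Set Implicit Arguments. Unset Strict Implicit. Unset Printing Implicit Defensive.
Import GRing.Theory.
Local Open Scope ring_scope.

(* Let F = F_{q^2} with q = 2^m = 1 (mod 3), s = (q^2+q+1)/3 and k = (q+2)/3,
   so that s = 1 + (q-1)k.  Every x != 0 has a "unit-circle part"
   W = x^((q-1)k), which satisfies W^(q+1) = 1 and
     x^s = x W,   x^(qs) = x W^2,   x^q = x W^3.
   Hence f(x) = x H(W) with H(W) = c + W + c^q W^2, and the Frobenius
   identity W^2 H(W)^q = H(W) gives f(x)^q = W f(x).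
   The trace condition Tr(c^(q+1)) = 0 forces H(W) != 0 on the unit circle:
   a root W would make y = c^q W a solution of y^2 + y = c^(q+1) with
   y^q = y (by the telescoping identity Tr(y^2+y) = y^q + y) and y^(q+1) =
   c^(q+1), whence y = 0.  So f vanishes only at 0, and f(x) determines W as
   the ratio f(x)^q / f(x), hence determines x = f(x) / H(W): f is injective,
   thus bijective on the finite field. *)

Lemma three_mul_third (q : nat) : (q %% 3 = 1)%N -> (3 * ((q + 2) %/ 3) = q + 2)%N.
Proof. by move=> hq; lia. Qed.

Lemma third_norm_exponent (q : nat) : (q %% 3 = 1)%N ->
  ((q ^ 2 + q + 1) %/ 3 = 1 + (q - 1) * ((q + 2) %/ 3))%N.
Proof. by move=> hq; rewrite (divn_eq q 3) hq; nia. Qed.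

Section CharacteristicTwo.
Variables (F : fieldType) (char2 : 2 \in [pchar F]).

Lemma frobenius2D (a b : F) (i : nat) :
  (a + b) ^+ (2 ^ i) = a ^+ (2 ^ i) + b ^+ (2 ^ i).
Proof. by apply: exprDn_pchar; rewrite pnatX (pnatE _ (pcharf_prime char2)) char2. Qed.

Lemma abs_trace_artin_schreier (y : F) (n : nat) :
  abs_trace n (y ^+ 2 + y) = y ^+ (2 ^ n) + y.
Proof.
rewrite /abs_trace; elim: n => [|n IH]; first by rewrite big_ord0 expr1 addrr_pchar2.
rewrite big_ord_recr /= IH frobenius2D -exprM -expnS.
set a := y ^+ (2 ^ n); set b := y ^+ (2 ^ n.+1).
have -> : a + y + (b + a) = (a + a) + (b + y) by ring.
by rewrite addrr_pchar2 // add0r.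
Qed.

End CharacteristicTwo.

Section UnitCircleDecomposition.
Variables (F : finFieldType) (q : nat).
Hypotheses (cardF : #|F| = (q ^ 2)%N) (q_mod3 : (q %% 3 = 1)%N).

Let k := ((q + 2) %/ 3)%N.
Let s := ((q ^ 2 + q + 1) %/ 3)%N.

Lemma q_gt1 : (1 < q)%N.
Proof.
have := finNzRing_gt1 F; rewrite cardF.
by case: q q_mod3 => [|[|n]].
Qed.

Lemma expf_qq (x : F) : x ^+ (q * q) = x.
Proof. by rewrite mulnn -cardF expf_card. Qed.

Definition circle_part (x : F) : F := x ^+ ((q - 1) * k).

Lemma expf_qq_pred (x : F) : x != 0 -> x ^+ (q * q - 1) = 1.
Proof.
move=> x0; apply: (mulIf x0); rewrite mul1r -exprSr.
have q1 := q_gt1.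
have -> : (q * q - 1).+1 = (q * q)%N by nia.
exact: expf_qq.
Qed.

Lemma circle_part_norm (x : F) : x != 0 -> circle_part x * circle_part x ^+ q = 1.
Proof.
move=> x0; rewrite -exprS /circle_part -exprM.
have q1 := q_gt1.
have -> : ((q - 1) * k * q.+1 = (q * q - 1) * k)%N by nia.
by rewrite exprM expf_qq_pred // expr1n.
Qed.

Lemma expf_q_circle (x : F) : x != 0 -> x ^+ q = x * circle_part x ^+ 3.
Proof.
move=> x0; rewrite /circle_part -exprM -exprS.
have q1 := q_gt1; have k3 := three_mul_third q_mod3.
have -> : (((q - 1) * k * 3).+1 = q + (q * q - 1))%N by rewrite -/k in k3; nia.
by rewrite exprD expf_qq_pred // mulr1.
Qed.

Lemma expf_s_circle (x : F) : x ^+ s = x * circle_part x.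
Proof. by rewrite /s third_norm_exponent // exprD expr1. Qed.

Lemma expf_qs_circle (x : F) : x != 0 -> x ^+ (q * s) = x * circle_part x ^+ 2.
Proof.
move=> x0; rewrite mulnC exprM expf_s_circle exprMn expf_q_circle //.
have -> : x * circle_part x ^+ 3 * circle_part x ^+ q
    = x * circle_part x ^+ 2 * (circle_part x * circle_part x ^+ q) by ring.
by rewrite circle_part_norm // mulr1.
Qed.

End UnitCircleDecomposition.

Section Permutation.
Variables (F : finFieldType) (m : nat) (c : F).
Let q := (2 ^ m)%N.
Hypotheses (cardF : #|F| = (q ^ 2)%N) (q_mod3 : (q %% 3 = 1)%N).
Hypotheses (c_neq0 : c != 0) (trace_c : abs_trace m (c ^+ q.+1) = 0).

Lemma char2 : 2 \in [pchar F].
Proof. by apply: (@card_finPcharP _ 2 (m * 2)); rewrite // cardF expnM. Qed.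

Lemma frobeniusD (a b : F) : (a + b) ^+ q = a ^+ q + b ^+ q.
Proof. by rewrite /q (frobenius2D char2). Qed.

Definition circle_factor (W : F) : F := c + W + c ^+ q * W ^+ 2.

Lemma circle_factor_frobenius (W : F) :
  W * W ^+ q = 1 -> W ^+ 2 * circle_factor W ^+ q = circle_factor W.
Proof.
move=> normW; rewrite /circle_factor !frobeniusD !exprMn -exprM expf_qq //.
transitivity (c ^+ q * W ^+ 2 + W * (W * W ^+ q) + c * (W * W ^+ q) ^+ 2); first ring.
by rewrite normW; ring.
Qed.

Lemma circle_factor_neq0 (W : F) : W * W ^+ q = 1 -> circle_factor W != 0.
Proof.
move=> normW; apply/eqP => H0.
have W0 : W != 0 by apply: contra_eq_neq normW => ->; rewrite mul0r eq_sym oner_neq0.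
pose y := c ^+ q * W; pose N := c ^+ q.+1.
have y_root : y ^+ 2 + y = N.
  have -> : y ^+ 2 + y = c ^+ q * circle_factor W - N.
    by rewrite /y /N /circle_factor (exprSr c q); ring.
  by rewrite H0 mulr0 sub0r (oppr_pchar2 char2).
have y_fixed : y ^+ q = y.
  apply/eqP; rewrite -subr_eq0 (GRing.subr_pchar2 char2) -trace_c -/N -y_root.
  by rewrite (abs_trace_artin_schreier char2).
have y_norm : y * y = N.
  rewrite -{1}y_fixed /y exprMn -exprM expf_qq // /N exprSr.
  transitivity (c ^+ q * c * (W * W ^+ q)); first ring.
  by rewrite normW mulr1.
have /eqP : y = 0 by apply: (addrI (y ^+ 2)); rewrite addr0 y_root -y_norm expr2.
by rewrite mulf_eq0 expf_eq0 (negbTE c_neq0) (negbTE W0) andbF.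
Qed.

Let s := ((q ^ 2 + q + 1) %/ 3)%N.
Let f (x : F) : F := c * x + x ^+ s + c ^+ q * x ^+ (q * s).

Lemma f_circle (x : F) : x != 0 -> f x = x * circle_factor (circle_part q x).
Proof.
move=> x0; rewrite /f expf_s_circle // expf_qs_circle //.
by rewrite /circle_factor; ring.
Qed.

(* f(x)^q = W f(x): the unit-circle part of x is read off from f(x). *)
Lemma f_frobenius (x : F) : x != 0 -> f x ^+ q = circle_part q x * f x.
Proof.
move=> x0; have normW := circle_part_norm cardF q_mod3 x0.
rewrite f_circle // exprMn expf_q_circle // -{2}(circle_factor_frobenius normW).
by ring.
Qed.

Lemma f_at0 : f 0 = 0.
Proof.
have s_gt0 : (0 < s)%N by rewrite /s third_norm_exponent.
have qs_gt0 : (0 < q * s)%N by rewrite muln_gt0 expn_gt0 s_gt0.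
by rewrite /f mulr0 !expr0n (gtn_eqF s_gt0) (gtn_eqF qs_gt0) mulr0 !addr0.
Qed.

Lemma f_neq0 (x : F) : x != 0 -> f x != 0.
Proof.
move=> x0; rewrite f_circle // mulf_neq0 // circle_factor_neq0 //.
exact: circle_part_norm.
Qed.

(* f(x) determines W = f(x)^q / f(x), and then x = f(x) / H(W). *)
Lemma f_injective : injective f.
Proof.
move=> x1 x2.
case: (eqVneq x1 0) => [->|x1_0]; case: (eqVneq x2 0) => [->|x2_0] // e.
- by move: (f_neq0 x2_0); rewrite -e f_at0 eqxx.
- by move: (f_neq0 x1_0); rewrite e f_at0 eqxx.
have sameW : circle_part q x1 = circle_part q x2.
  by apply: (mulIf (f_neq0 x1_0)); rewrite -f_frobenius // e f_frobenius.
have H2_neq0 := circle_factor_neq0 (circle_part_norm cardF q_mod3 x2_0).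
by move: e; rewrite f_circle // f_circle // sameW => /(mulIf H2_neq0).
Qed.

End Permutation.

Theorem proposition2 (m : nat) (F : finFieldType) (c : F) :
  let q := (2 ^ m)%N in
  let s := ((q ^ 2 + q + 1) %/ 3)%N in
  #|F| = (q ^ 2)%N ->
  (q %% 3 = 1)%N ->
  c != 0 ->
  abs_trace m (c ^+ q.+1) = 0 ->
  is_perm_poly (fun x : F => c * x + x ^+ s + c ^+ q * x ^+ (q * s)).
Proof.
move=> q s cardF q_mod3 c_neq0 trace_c.
exact: injF_bij (f_injective cardF q_mod3 c_neq0 trace_c).
Qed.
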